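(* Let $A$ be a semiprime $2$-torsion free associative algebra and let $Q$ be a subalgebra of $Q_s(A)$ containing $A$. Then $[Q^{(-)},Q^{(-)}]/Z([Q^{(-)},Q^{(-)}])$ is a Lie algebra of quotients of $[A^{(-)},A^{(-)}]/Z([A^{(-)},A^{(-)}])$ (the latter being naturally a Lie subalgebra of the former).
   Context: Algebras are over a commutative unital ring $\Phi$. For an associative algebra $A$, $A^{(-)}$ is the Lie algebra on $A$ with $[x,y]=xy-yx$; $[A^{(-)},A^{(-)}]$ is the $\Phi$-span of all $[x,y]$, a Lie subalgebra, and $Z(\cdot)$ denotes the center of a Lie algebra. $A$ is $2$-torsion free if $2x=0\Rightarrow x=0$. $Q_s(A)$ is the Martindale symmetric algebra of quotients of the semiprime algebra $A$: the elements $q$ of the maximal left quotient algebra $Q^l_{\max}(A)$ for which some essential ideal $I$ of $A$ satisfies $Iq+qI\subseteq A$. For a Lie subalgebra $L\subseteq Q$, $Q$ is an algebra of quotients of $L$ if for every nonzero $q\in Q$ there is an ideal $I$ of $L$ with $\mathrm{Ann}_L(I)=\{a\in L:[a,I]=0\}=0$ and $0\ne[I,q]\subseteq L$. *)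

From HB Require Import structures.
From mathcomp Require Import all_boot all_order all_algebra.
Set Implicit Arguments. Unset Strict Implicit. Unset Printing Implicit Defensive.
Import GRing.Theory.
Local Open Scope ring_scope.

(* Everything lives inside an ambient associative algebra [S] over the
   commutative unital ring [R] (= Phi).  Subalgebras, ideals, Lie
   subalgebras are predicates [S -> Prop]. *)
Section Defs.
Variables (R : comPzRingType) (S : algType R).

Definition lie (x y : S) : S := x * y - y * x.

Definition is_subalg (A : S -> Prop) : Prop :=
  [/\ A 0,
      (forall x y, A x -> A y -> A (x + y)),
      (forall (c : R) x, A x -> A (c *: x)) &
      (forall x y, A x -> A y -> A (x * y))].

Definition is_ideal (A I : S -> Prop) : Prop :=
  [/\ (forall x, I x -> A x),
      I 0,
      (forall x y, I x -> I y -> I (x + y)),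
      (forall (c : R) x, I x -> I (c *: x)) &
      (forall a x, A a -> I x -> I (a * x) /\ I (x * a))].

Definition semiprime (A : S -> Prop) : Prop :=
  forall I, is_ideal A I -> (forall x y, I x -> I y -> x * y = 0) ->
    forall x, I x -> x = 0.

Definition two_torsion_free (A : S -> Prop) : Prop :=
  forall a, A a -> a *+ 2 = 0 -> a = 0.

Definition essential_ideal (A I : S -> Prop) : Prop :=
  is_ideal A I /\
  forall J, is_ideal A J -> (exists j, J j /\ j <> 0) ->
    exists x, I x /\ J x /\ x <> 0.

(* [S] (together with the embedding of A as a subset) is the Martindale
   symmetric algebra of quotients Q_s(A) of the semiprime algebra A,
   given by its standard characterisation. *)
Definition is_Qs (A : S -> Prop) : Prop :=
  [/\
      (forall q : S, exists I, essential_ideal A I /\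
          forall x, I x -> A (x * q) /\ A (q * x)),
      (forall (q : S) I, essential_ideal A I ->
          (forall x, I x -> x * q = 0) -> q = 0) &
      (forall I (f g : S -> S), essential_ideal A I ->
          (forall x, I x -> A (f x) /\ A (g x)) ->
          (forall x y, I x -> I y -> f (x + y) = f x + f y /\ g (x + y) = g x + g y) ->
          (forall (c : R) x, I x -> f (c *: x) = c *: f x /\ g (c *: x) = c *: g x) ->
          (forall a x, A a -> I x -> f (a * x) = a * f x /\ g (x * a) = g x * a) ->
          (forall x y, I x -> I y -> f x * y = x * g y) ->
          exists q : S, forall x, I x -> x * q = f x /\ q * x = g x)].

(* [Q^(-), Q^(-)]: the Phi-span of all [x,y], x y in Q.  Since
   c [x,y] = [c x, y], it is the set of finite sums of commutators. *)
Definition comm_span (Q : S -> Prop) (z : S) : Prop :=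
  exists s : seq (S * S), (forall p, p \in s -> Q p.1 /\ Q p.2) /\
    z = \sum_(p <- s) lie p.1 p.2.

Definition lie_center (L : S -> Prop) (z : S) : Prop :=
  L z /\ forall y, L y -> lie z y = 0.

Definition is_lie_ideal (L J : S -> Prop) : Prop :=
  [/\ (forall x, J x -> L x),
      J 0,
      (forall x y, J x -> J y -> J (x + y)),
      (forall (c : R) x, J x -> J (c *: x)) &
      (forall a x, L a -> J x -> J (lie a x))].

(* Lie algebra of quotients, stated for the quotients
   LQ / Z(LQ)  (big)  and  LA / Z(LA)  (small) through representatives:
   the natural map LA/Z(LA) -> LQ/Z(LQ) is well defined and injective
   (Z(LA) ⊆ Z(LQ), LA ∩ Z(LQ) ⊆ Z(LA)), and for every nonzero class
   qbar of LQ/Z(LQ) there is an ideal Ibar of LA/Z(LA) (the image of an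
   ideal J of LA) with zero annihilator in LA/Z(LA) and
   0 <> [Ibar, qbar] ⊆ LA/Z(LA). *)
Definition quotient_lie_algebra_of_quotients (LA LQ : S -> Prop) : Prop :=
  [/\ (forall x, LA x -> LQ x),
      (forall z, lie_center LA z -> lie_center LQ z),
      (forall z, LA z -> lie_center LQ z -> lie_center LA z) &
      forall q, LQ q -> ~ lie_center LQ q ->
        exists J, [/\ is_lie_ideal LA J,
          (forall a, LA a -> (forall j, J j -> lie_center LA (lie a j)) ->
              lie_center LA a),
          (exists j, J j /\ ~ lie_center LQ (lie j q)) &
          (forall j, J j -> exists a, LA a /\ lie_center LQ (lie j q - a))]].

End Defs.

From HB Require Import structures.
From mathcomp Require Import all_boot all_order all_algebra.
From Stdlib Require Import Classical_Prop.
Set Implicit Arguments. Unset Strict Implicit. Unset Printing Implicit Defensive.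
Import GRing.Theory.
Local Open Scope ring_scope.

(* The heart of the proof is a centrality criterion in Q_s(A): if I is an essential
   ideal, [a, I] is contained in A and [a, [I, I]] is central, then a is central.
   It rests on three facts: an element commuting with an essential ideal is central
   (faithfulness of Q_s(A)); by semiprimeness, e I e = 0 forces e = 0, so a central
   c in A with c^2 = 0 vanishes; and Posner's lemma, which uses 2-torsion freeness.
   Given q in [Q, Q] outside the centre, choose an essential I with I q + q I in A
   and take [I, I] as Lie ideal: [[I, I], q] lies in [A, A] by Jacobi, and both the
   triviality of its annihilator and the non-centrality of [[I, I], q] follow from
   the criterion, because elements of [A, A] centralising [A, A] are central. *)

Section LieBracket.
Variables (R : comPzRingType) (S : algType R).
Implicit Types a c u v w x y z : S.

Lemma lierr x : lie x x = 0. Proof. by rewrite /lie subrr. Qed.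
Lemma lie0l x : lie 0 x = 0. Proof. by rewrite /lie mul0r mulr0 subrr. Qed.
Lemma lie0r x : lie x 0 = 0. Proof. by rewrite /lie mul0r mulr0 subrr. Qed.
Lemma lieC x y : lie x y = - lie y x. Proof. by rewrite /lie opprB. Qed.

Lemma lieDl x y z : lie (x + y) z = lie x z + lie y z.
Proof. by rewrite /lie mulrDl mulrDr opprD addrACA. Qed.

Lemma lieDr x y z : lie z (x + y) = lie z x + lie z y.
Proof. by rewrite /lie mulrDl mulrDr opprD addrACA. Qed.

Lemma lieNl x y : lie (- x) y = - lie x y.
Proof. by rewrite /lie mulNr mulrN opprB addrC opprK. Qed.

Lemma lieNr x y : lie x (- y) = - lie x y.
Proof. by rewrite /lie mulNr mulrN opprB addrC opprK. Qed.

Lemma lieZl (k : R) x y : lie (k *: x) y = k *: lie x y.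
Proof. by rewrite /lie scalerBr scalerAl scalerAr. Qed.

Lemma lieMr x y z : lie x (y * z) = lie x y * z + y * lie x z.
Proof. by rewrite /lie mulrBl mulrBr !mulrA addrA addrNK. Qed.

Lemma lie_jacobi a x y : lie a (lie x y) = lie (lie a x) y + lie x (lie a y).
Proof.
rewrite [lie x y]/lie lieDr lieNr !lieMr.
set ax := lie a x; set ay := lie a y.
by rewrite /lie opprD [- (ay * x) + _]addrC addrACA.
Qed.

Lemma lie_jacobi_r a x y : lie (lie x y) a = lie (lie x a) y + lie x (lie y a).
Proof. by rewrite lieC lie_jacobi (lieC a x) (lieC a y) lieNl lieNr opprD !opprK. Qed.

Definition central z := forall s : S, z * s = s * z.

Lemma centralN z : central z -> central (- z).
Proof. by move=> cz s; rewrite mulNr mulrN cz. Qed.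

Lemma lie_centrall z s : central z -> lie z s = 0.
Proof. by move=> cz; rewrite /lie cz subrr. Qed.

Lemma lie_centralr z s : central z -> lie s z = 0.
Proof. by move=> cz; rewrite /lie cz subrr. Qed.

Lemma lie_eq0_comm x y : lie x y = 0 -> x * y = y * x.
Proof. by move/eqP; rewrite subr_eq0 => /eqP. Qed.

Lemma lie_centralMl c u w : central c -> lie (c * u) w = c * lie u w.
Proof. by move=> cc; rewrite /lie mulrBr !mulrA -(cc w). Qed.

Lemma lie_centralMr c u w : central c -> lie u (c * w) = c * lie u w.
Proof. by move=> cc; rewrite lieMr (lie_centralr _ cc) mul0r add0r. Qed.

(* Expand [u, [a, u v]] = 0 using [a, u v] = [a, u] v + u [a, v]. *)
Lemma lie_central_mul_eq0 a u v :
  central (lie a u) -> central (lie a v) -> central (lie a (u * v)) ->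
  lie a u * lie u v = 0.
Proof.
move=> cu cv cuv; have := lie_centralr u cuv.
rewrite lieMr lieDr (lie_centralMr _ _ cu) lieMr lierr mul0r add0r.
by rewrite (lie_centralr _ cv) mulr0 addr0.
Qed.

Lemma lie_center_central (L : S -> Prop) z : L z -> central z -> lie_center L z.
Proof. by move=> Lz cz; split=> // y _; exact: lie_centrall. Qed.

End LieBracket.

Section Subalgebras.
Variables (R : comPzRingType) (S : algType R) (A : S -> Prop).
Hypothesis hA : is_subalg A.
Implicit Types x y : S.

Lemma subalg0 : A 0. Proof. by case: hA. Qed.
Lemma subalgD x y : A x -> A y -> A (x + y). Proof. by case: hA => _ h _ _; apply: h. Qed.
Lemma subalgZ (k : R) x : A x -> A (k *: x). Proof. by case: hA => _ _ h _; apply: h. Qed.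
Lemma subalgM x y : A x -> A y -> A (x * y). Proof. by case: hA => _ _ _ h; apply: h. Qed.

Lemma subalgB x y : A x -> A y -> A (x - y).
Proof. by move=> Ax Ay; apply: subalgD => //; rewrite -scaleN1r; apply: subalgZ. Qed.

Lemma subalg_lie x y : A x -> A y -> A (lie x y).
Proof. by move=> Ax Ay; apply: subalgB; apply: subalgM. Qed.

Lemma subalg_ideal : is_ideal A A.
Proof.
by split=> //; [exact: subalg0 | exact: subalgD | exact: subalgZ | split; apply: subalgM].
Qed.

End Subalgebras.

Section Ideals.
Variables (R : comPzRingType) (S : algType R) (A I : S -> Prop).
Hypothesis hI : is_ideal A I.
Implicit Types a x y : S.

Lemma ideal_sub x : I x -> A x. Proof. by case: hI => h _ _ _ _; apply: h. Qed.
Lemma ideal0 : I 0. Proof. by case: hI. Qed.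
Lemma idealD x y : I x -> I y -> I (x + y). Proof. by case: hI => _ _ h _ _; apply: h. Qed.
Lemma idealZ (k : R) x : I x -> I (k *: x). Proof. by case: hI => _ _ _ h _; apply: h. Qed.
Lemma idealMl a x : A a -> I x -> I (a * x).
Proof. by case: hI => _ _ _ _ h Aa Ix; case: (h a x Aa Ix). Qed.
Lemma idealMr a x : A a -> I x -> I (x * a).
Proof. by case: hI => _ _ _ _ h Aa Ix; case: (h a x Aa Ix). Qed.
Lemma idealB x y : I x -> I y -> I (x - y).
Proof. by move=> Ix Iy; apply: idealD => //; rewrite -scaleN1r; apply: idealZ. Qed.
Lemma idealM x y : I x -> I y -> I (x * y).
Proof. by move=> Ix Iy; apply: idealMr => //; apply: ideal_sub. Qed.
Lemma ideal_lie a x : A a -> I x -> I (lie a x).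
Proof. by move=> Aa Ix; apply: idealB; [apply: idealMl | apply: idealMr]. Qed.

Lemma idealI (Z : S -> Prop) : Z 0 ->
  (forall x y, Z x -> Z y -> Z (x + y)) -> (forall (k : R) x, Z x -> Z (k *: x)) ->
  (forall a x, A a -> I x -> Z x -> Z (a * x) /\ Z (x * a)) ->
  is_ideal A (fun x => I x /\ Z x).
Proof.
move=> Z0 ZD ZZ ZM; split.
- by move=> x [/ideal_sub].
- by split; [exact: ideal0 | exact: Z0].
- by move=> x y [Ix Zx] [Iy Zy]; split; [exact: idealD | exact: ZD].
- by move=> k x [Ix Zx]; split; [exact: idealZ | exact: ZZ].
- move=> a x Aa [Ix Zx]; have [Zax Zxa] := ZM a x Aa Ix Zx.
  by split; split; [exact: idealMl | | exact: idealMr |].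
Qed.

End Ideals.

Lemma ideal_setI (R : comPzRingType) (S : algType R) (A I J : S -> Prop) :
  is_ideal A I -> is_ideal A J -> is_ideal A (fun x => I x /\ J x).
Proof.
move=> hI hJ; apply: (idealI hI); [exact: (ideal0 hJ) | exact: (idealD hJ) |
  exact: (idealZ hJ) |].
by move=> a x Aa _ Jx; split; [exact: (idealMl hJ Aa Jx) | exact: (idealMr hJ Aa Jx)].
Qed.

Lemma essential_idealI (R : comPzRingType) (S : algType R) (A I J : S -> Prop) :
  essential_ideal A I -> essential_ideal A J -> essential_ideal A (fun x => I x /\ J x).
Proof.
move=> [hI eI] [hJ eJ]; split; first exact: ideal_setI.
move=> K hK /(eI K hK) [x [Ix [Kx nx]]].
have [|y [Jy [[Iy Ky] ny]]] := eJ _ (ideal_setI hI hK); first by exists x.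
by exists y.
Qed.

Lemma essential_ideal_self (R : comPzRingType) (S : algType R) (A : S -> Prop) :
  is_subalg A -> essential_ideal A A.
Proof.
move=> hA; split; first exact: subalg_ideal.
by move=> J hJ [j [Jj nj]]; exists j; split=> //; exact: (ideal_sub hJ Jj).
Qed.

Section CommutatorSpan.
Variables (R : comPzRingType) (S : algType R).
Implicit Types (P T : S -> Prop) (x y z : S).

Lemma comm_span0 P : comm_span P 0.
Proof. by exists [::]; rewrite big_nil. Qed.

Lemma comm_span_lie P x y : P x -> P y -> comm_span P (lie x y).
Proof.
move=> Px Py; exists [:: (x, y)]; split; last by rewrite big_seq1.
by move=> p; rewrite inE => /eqP ->.
Qed.

Lemma comm_spanD P y z : comm_span P y -> comm_span P z -> comm_span P (y + z).
Proof.
move=> [s1 [hs1 ->]] [s2 [hs2 ->]]; exists (s1 ++ s2); split; last by rewrite big_cat.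
by move=> p; rewrite mem_cat => /orP [/hs1 | /hs2].
Qed.

Lemma comm_span_ind P T : T 0 -> (forall y z, T y -> T z -> T (y + z)) ->
  (forall x y, P x -> P y -> T (lie x y)) -> forall z, comm_span P z -> T z.
Proof.
move=> T0 TD Tlie z [s [hs ->]]; elim: s hs => [|p s IHs] hs; first by rewrite big_nil.
rewrite big_cons; apply: TD; first by have [? ?] := hs p (mem_head _ _); apply: Tlie.
by apply: IHs => p' p's; apply: hs; rewrite in_cons p's orbT.
Qed.

Lemma comm_span_mono P T z : (forall x, P x -> T x) -> comm_span P z -> comm_span T z.
Proof.
move=> PT; move: z; apply: comm_span_ind; [exact: comm_span0 | exact: comm_spanD |].
by move=> x y Px Py; apply: comm_span_lie; apply: PT.
Qed.

Lemma comm_spanZ P (k : R) z : (forall (k : R) x, P x -> P (k *: x)) ->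
  comm_span P z -> comm_span P (k *: z).
Proof.
move=> PZ; move: z; apply: (comm_span_ind (T := fun z => comm_span P (k *: z))).
- by rewrite scaler0; exact: comm_span0.
- by move=> y w Py Pw; rewrite scalerDr; exact: comm_spanD.
- by move=> x y Px Py; rewrite -lieZl; apply: comm_span_lie => //; apply: PZ.
Qed.

Lemma comm_span_subalg (A : S -> Prop) z : is_subalg A -> comm_span A z -> A z.
Proof.
move=> hA; move: z; apply: comm_span_ind;
  [exact: subalg0 hA | exact: subalgD hA | exact: subalg_lie hA].
Qed.

Lemma comm_span_ideal_lie (A I : S -> Prop) a z :
  is_ideal A I -> A a -> comm_span I z -> comm_span I (lie a z).
Proof.
move=> hI Aa; move: z; apply: (comm_span_ind (T := fun z => comm_span I (lie a z))).
- by rewrite lie0r; exact: comm_span0.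
- by move=> y w Iy Iw; rewrite lieDr; exact: comm_spanD.
- move=> x y Ix Iy; rewrite lie_jacobi.
  apply: comm_spanD; apply: comm_span_lie => //.
  - exact: (ideal_lie hI Aa Ix).
  - exact: (ideal_lie hI Aa Iy).
Qed.

Lemma comm_span_lie_ideal (A I : S -> Prop) : is_subalg A -> is_ideal A I ->
  is_lie_ideal (comm_span A) (comm_span I).
Proof.
move=> hA hI; split.
- by move=> x; apply: comm_span_mono; apply: ideal_sub hI.
- exact: comm_span0.
- by move=> x y; exact: comm_spanD.
- by move=> k x; apply: comm_spanZ; exact: idealZ hI.
- by move=> a x /(comm_span_subalg hA) Aa; exact: (comm_span_ideal_lie hI Aa).
Qed.

End CommutatorSpan.

Section Semiprime.
Variables (R : comPzRingType) (S : algType R) (A : S -> Prop).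
Hypothesis hsp : semiprime A.
Implicit Types (I P : S -> Prop) (a b c e m x y : S).

(* {m in P | m P = 0} is an ideal of zero square. *)
Lemma semiprime_lann_eq0 P m : is_ideal A P -> P m -> (forall x, P x -> m * x = 0) ->
  m = 0.
Proof.
move=> hP Pm mP; pose N := fun m => forall x, P x -> m * x = 0.
have hN : is_ideal A (fun m => P m /\ N m).
  apply: (idealI hP) => [x Px | y z Ny Nz x Px | k y Ny x Px | a y Aa Py Ny].
  - by rewrite mul0r.
  - by rewrite mulrDl Ny ?Nz ?addr0.
  - by rewrite -scalerAl Ny ?scaler0.
  split=> x Px; first by rewrite -mulrA Ny ?mulr0.
  by rewrite -mulrA Ny //; exact: (idealMl hP Aa Px).
by apply: (hsp hN) => [x y [_ Nx] [Py _]|]; [exact: Nx | split].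
Qed.

(* Apply the previous lemma twice: first to [e y] inside the ideal of those
   [m] in I with [e I m = 0], then to [e] inside I. *)
Lemma semiprime_sandwich_eq0 I e : is_ideal A I -> I e ->
  (forall y, I y -> e * y * e = 0) -> e = 0.
Proof.
move=> hI Ie eIe; pose N := fun m => forall y, I y -> e * y * m = 0.
have hN : is_ideal A (fun m => I m /\ N m).
  apply: (idealI hI) => [y Iy | z w Nz Nw y Iy | k z Nz y Iy | a z Aa Iz Nz].
  - by rewrite mulr0.
  - by rewrite mulrDr Nz ?Nw ?addr0.
  - by rewrite -scalerAr Nz ?scaler0.
  split=> y Iy; last by rewrite mulrA Nz ?mul0r.
  by rewrite mulrA -(mulrA e) Nz //; exact: (idealMr hI Aa Iy).
apply: (semiprime_lann_eq0 hI Ie) => y Iy.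
apply: (semiprime_lann_eq0 hN) => [|m [_ Nm]]; last exact: Nm.
split; first exact: (idealMr hI (ideal_sub hI Iy) Ie).
by move=> z Iz; rewrite !mulrA eIe ?mul0r.
Qed.

Lemma central_sqr_eq0 c : is_subalg A -> A c -> central c -> c * c = 0 -> c = 0.
Proof.
move=> hA Ac cc c2; apply: (semiprime_sandwich_eq0 (subalg_ideal hA) Ac) => y _.
by rewrite -mulrA -cc mulrA c2 mul0r.
Qed.

Hypothesis h2 : two_torsion_free A.

(* Posner: for d = [b, _], expanding d^2 (r s) = 0 gives 2 d r d s = 0, and then
   d r d (s r) = 0 gives d r I d r = 0. *)
Lemma inner_derivation_sqr_eq0 I b : is_ideal A I -> A b ->
  (forall r, I r -> lie b (lie b r) = 0) -> forall r, I r -> lie b r = 0.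
Proof.
move=> hI Ab d2 r Ir.
have Id s : I s -> I (lie b s) by move=> Is; exact: (ideal_lie hI Ab Is).
have dd s t : I s -> I t -> lie b s * lie b t = 0.
  move=> Is It; apply: h2; first exact: (ideal_sub hI (idealM hI (Id s Is) (Id t It))).
  have := d2 (s * t) (idealM hI Is It).
  by rewrite !lieMr lieDr !lieMr d2 // (d2 t It) mul0r mulr0 add0r addr0 mulr2n.
apply: (semiprime_sandwich_eq0 hI (Id r Ir)) => s Is.
have := dd r (s * r) Ir (idealM hI Is Ir).
by rewrite lieMr mulrDr mulrA dd // mul0r add0r mulrA.
Qed.

End Semiprime.

Section MartindaleQuotients.
Variables (R : comPzRingType) (S : algType R) (A : S -> Prop).
Hypotheses (hA : is_subalg A) (hsp : semiprime A) (h2 : two_torsion_free A)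
  (hQs : is_Qs A).
Implicit Types (I : S -> Prop) (a c g q s w x y z : S).

(* Given s, pick an essential J with J s in A.  For x in I and y in J both x y s
   and x y lie in I, so x y (s w - w s) = 0, and faithfulness twice gives s w = w s. *)
Lemma central_of_commute_essential I w : essential_ideal A I ->
  (forall x, I x -> x * w = w * x) -> central w.
Proof.
case: hQs => den faithful _ eI Iw s.
have [J [eJ Js]] := den s; have hI := proj1 eI.
apply/eqP; rewrite eq_sym -subr_eq0; apply/eqP.
apply: (faithful _ _ (essential_idealI eI eJ)) => y [Iy Jy].
apply: (faithful _ _ eI) => x Ix.
have Ixys : I (x * (y * s)) by apply: (idealMr hI (proj1 (Js y Jy)) Ix).
rewrite mulrBr mulrBr !mulrA.
have -> : x * y * s * w = w * (x * (y * s)) by rewrite -(Iw _ Ixys) !mulrA.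
have -> : x * y * w * s = w * (x * (y * s)).
  by rewrite -(mulrA x y w) (Iw y Iy) mulrA (Iw x Ix) !mulrA.
by rewrite subrr.
Qed.

Lemma central_of_lie_commutators_eq0 I g : essential_ideal A I -> A g ->
  (forall x y, I x -> I y -> lie g (lie x y) = 0) -> central g.
Proof.
move=> eI Ag gII; have hI := proj1 eI.
apply: (central_of_commute_essential eI) => x Ix; apply: lie_eq0_comm.
rewrite lieC; apply/eqP; rewrite oppr_eq0; apply/eqP.
set e := lie g x; have Ie : I e by exact: (ideal_lie hI Ag Ix).
have e_lie y : I y -> e * lie x y = 0.
  move=> Iy; have := gII x (x * y) Ix (idealM hI Ix Iy).
  by rewrite lieMr lierr mul0r add0r lieMr gII // mulr0 addr0.
apply: (semiprime_sandwich_eq0 hsp hI Ie) => y Iy.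
have := e_lie (y * g) (idealMr hI Ag Iy).
rewrite lieMr mulrDr mulrA e_lie // mul0r add0r (lieC x g) -/e !mulrN mulrA.
by move/eqP; rewrite oppr_eq0 => /eqP.
Qed.

(* c = [a, u] is central, so [a, c u] = c^2; if c u commutes with I it is central,
   whence c^2 = 0. *)
Lemma central_lie_eq0 I a u : essential_ideal A I ->
  A (lie a u) -> central (lie a u) ->
  (forall r, I r -> lie (lie a u * u) r = 0) -> lie a u = 0.
Proof.
set c := lie a u => eI Ac cc cuI; apply: (central_sqr_eq0 hsp hA Ac cc).
have ccu : central (c * u).
  by apply: (central_of_commute_essential eI) => r Ir; rewrite (lie_eq0_comm (cuI r Ir)).
by rewrite -(lie_centralr a ccu) lieMr (lie_centralr _ cc) mul0r add0r.
Qed.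

Section CentralCriterion.
Variables (I : S -> Prop) (a : S).
Hypotheses (eI : essential_ideal A I) (aI : forall x, I x -> A (lie a x))
  (aII : forall x y, I x -> I y -> central (lie a (lie x y))).

Let hI : is_ideal A I := proj1 eI.

(* With u = [x, y] and c = [a, u]: c [u, [u, r]] = 0, so [c u, _] squares to
   zero on I and vanishes by Posner's lemma. *)
Lemma lie_commutator_eq0 x y : I x -> I y -> lie a (lie x y) = 0.
Proof.
move=> Ix Iy; set u := lie x y; have Iu : I u := ideal_lie hI (ideal_sub hI Ix) Iy.
have cc : central (lie a u) := aII Ix Iy.
apply: (central_lie_eq0 eI (aI Iu) cc) => r Ir.
have Icu : A (lie a u * u) := subalgM hA (aI Iu) (ideal_sub hI Iu).
apply: (inner_derivation_sqr_eq0 hsp h2 hI Icu _ Ir) => s Is.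
rewrite !(lie_centralMl _ _ cc) (lie_centralMr _ _ cc).
have uus : lie u (u * s) = u * lie u s by rewrite lieMr lierr mul0r add0r.
rewrite (lie_central_mul_eq0 cc (aII Iu Is)) ?mulr0 // -uus.
exact: aII Iu (idealM hI Iu Is).
Qed.

Lemma central_lie_ideal r : I r -> central (lie a r).
Proof.
move=> Ir; apply: (central_of_lie_commutators_eq0 eI (aI Ir)) => x y Ix Iy.
have := lie_commutator_eq0 Ir (ideal_lie hI (ideal_sub hI Ix) Iy).
by rewrite lie_jacobi lie_commutator_eq0 // lie0r addr0.
Qed.

Lemma lie_ideal_eq0 x : I x -> lie a x = 0.
Proof.
move=> Ix; have cc := central_lie_ideal Ix.
apply: (central_lie_eq0 eI (aI Ix) cc) => r Ir.
rewrite (lie_centralMl _ _ cc) (lie_central_mul_eq0 cc (central_lie_ideal Ir)) //.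
exact: central_lie_ideal (idealM hI Ix Ir).
Qed.

Lemma central_of_central_lie_commutators : central a.
Proof.
apply: (central_of_commute_essential eI) => x Ix.
by rewrite (lie_eq0_comm (lie_ideal_eq0 Ix)).
Qed.

End CentralCriterion.

Lemma central_of_lie_center z : lie_center (comm_span A) z -> central z.
Proof.
move=> [Lz zL]; have Az := comm_span_subalg hA Lz.
apply: (central_of_lie_commutators_eq0 (essential_ideal_self hA) Az) => x y Ax Ay.
exact: zL (comm_span_lie Ax Ay).
Qed.

Section Denominator.
Variables (I : S -> Prop) (q : S).
Hypotheses (eI : essential_ideal A I) (Iq : forall x, I x -> A (x * q) /\ A (q * x)).

Let hI : is_ideal A I := proj1 eI.

Lemma comm_span_lie_denominator j : comm_span I j -> comm_span A (lie j q).
Proof.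
have Aq x : I x -> A (lie x q) by move=> /Iq [? ?]; exact: subalgB.
move: j; apply: (comm_span_ind (T := fun j => comm_span A (lie j q))).
- by rewrite lie0l; exact: comm_span0.
- by move=> y z Ay Az; rewrite lieDl; exact: comm_spanD.
- move=> x y Ix Iy; rewrite lie_jacobi_r.
  apply: comm_spanD; apply: comm_span_lie;
    [exact: Aq | exact: (ideal_sub hI Iy) | exact: (ideal_sub hI Ix) | exact: Aq].
Qed.

Lemma lie_center_of_ann a : comm_span A a ->
  (forall j, comm_span I j -> lie_center (comm_span A) (lie a j)) ->
  lie_center (comm_span A) a.
Proof.
move=> La aI; apply: (lie_center_central La).
have Aa := comm_span_subalg hA La.
apply: (central_of_central_lie_commutators eI) => [x Ix | x y Ix Iy].
  exact: (subalg_lie hA Aa (ideal_sub hI Ix)).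
exact: central_of_lie_center (aI _ (comm_span_lie Ix Iy)).
Qed.

Lemma exists_lie_noncentral (Q : S -> Prop) : (forall x, A x -> Q x) ->
  comm_span Q q -> ~ lie_center (comm_span Q) q ->
  exists j, comm_span I j /\ ~ lie_center (comm_span Q) (lie j q).
Proof.
move=> AQ Lq nq; apply: NNPP => none; apply/nq/(lie_center_central Lq).
apply: (central_of_central_lie_commutators eI) => [x /Iq [? ?] | x y Ix Iy].
  exact: subalgB.
have Ixy := comm_span_lie Ix Iy.
have [_ zQ] : lie_center (comm_span Q) (lie (lie x y) q).
  by apply: NNPP => nz; apply: none; exists (lie x y).
rewrite lieC; apply/centralN/central_of_lie_center.
split=> [|w Lw]; first exact: comm_span_lie_denominator.
exact/zQ/(comm_span_mono AQ).
Qed.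

End Denominator.

End MartindaleQuotients.

Theorem mainTheorem4 (R : comPzRingType) (S : algType R) (A Q : S -> Prop) :
  is_subalg A -> semiprime A -> two_torsion_free A ->
  is_Qs A ->
  is_subalg Q -> (forall a, A a -> Q a) ->
  quotient_lie_algebra_of_quotients (comm_span A) (comm_span Q).
Proof.
move=> hA hsp h2 hQs _ AQ; have AQspan := comm_span_mono AQ.
split=> [|z zA|z Az [_ zQ]|q Qq nq]; first exact: AQspan.
- apply: (lie_center_central (AQspan _ zA.1)).
  exact: (central_of_lie_center hA hsp hQs zA).
- by split=> // y /AQspan; exact: zQ.
have [den _ _] := hQs; have [I [eI Iq]] := den q.
exists (comm_span I); split.
- exact: (comm_span_lie_ideal hA (proj1 eI)).
- exact: (lie_center_of_ann hA hsp h2 hQs eI).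
- exact: (exists_lie_noncentral hA hsp h2 hQs eI Iq AQ Qq nq).
- move=> j Ij; exists (lie j q); split.
    exact: (comm_span_lie_denominator hA eI Iq Ij).
  rewrite subrr; apply: lie_center_central => [|s]; first exact: comm_span0.
  by rewrite mul0r mulr0.
Qed.
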